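(* Let $\mathcal H$ be a hypothesis class over $\mathcal X$ and let $R\subseteq\mathcal X$ be a set of size $n$ that is shattered by $\mathcal H$. There exist two functions $F_a,F_b$ mapping $n$-bit strings to samples of labelled examples with points from $R$ such that for every $x,y\in\{0,1\}^n$, $x\cap y=\emptyset$ (identifying bit strings with subsets of $[n]$) if and only if the joint sample $S=(F_a(x),F_b(y))$ is realizable by $\mathcal H|_R$.
   Context: A sample is a finite sequence of examples $(x,y)\in\mathcal X\times\{\pm1\}$; $(S_1,S_2)$ denotes concatenation. $\mathcal H|_R=\{h|_R:h\in\mathcal H\}$. A sample is realizable by a class if some member of the class agrees with all its examples. *)

From mathcomp Require Import all_boot.
Set Implicit Arguments. Unset Strict Implicit. Unset Printing Implicit Defensive.

(* Labels {+1,-1} are encoded as bool (true = +1, false = -1).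
   A hypothesis over X is a function X -> bool; a class is a predicate on them. *)
Definition hclass (X : Type) := (X -> bool) -> Prop.

Definition sample (X : Type) := seq (X * bool).

(* The finite point set R is given as a duplicate-free list; its elements form
   the subtype rpt R. *)
Definition rpt (X : eqType) (R : seq X) := {x : X | x \in R}.

Definition restrict (X : eqType) (H : hclass X) (R : seq X) :
  (rpt R -> bool) -> Prop :=
  fun g => exists h, H h /\ forall x : rpt R, g x = h (proj1_sig x).

Definition shattered (X : eqType) (H : hclass X) (R : seq X) : Prop :=
  forall f : rpt R -> bool, exists h, H h /\ forall x : rpt R, h (proj1_sig x) = f x.

Definition points_in (X : eqType) (R : seq X) (S : sample X) : Prop :=
  forall e, e \in S -> e.1 \in R.

(* A sample is realizable by a class of functions on R: some member agrees
   with all its examples (which must therefore have points in R). *)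
Definition realizable_on (X : eqType) (R : seq X)
    (C : (rpt R -> bool) -> Prop) (S : sample X) : Prop :=
  exists g, C g /\ forall e, e \in S ->
    exists hR : e.1 \in R, g (exist _ e.1 hR) = e.2.

Definition bits (n : nat) := {ffun 'I_n -> bool}.
Definition disjoint_bits (n : nat) (x y : bits n) : Prop :=
  forall i : 'I_n, ~~ (x i && y i).

(* Both samples use every point r_i of R = [r_0; ...; r_(n-1)]: F_a(x) labels
   r_i with +1 when i is in x, and F_b(y) labels r_i with -1 when i is in y.
   The joint sample is contradictory exactly on the points indexed by x ∩ y;
   when x ∩ y is empty, the labelling "r_i is +1 iff i is in x" agrees with it
   and is realized by H because R is shattered. *)

From mathcomp Require Import all_boot.

Set Implicit Arguments.
Unset Strict Implicit.
Unset Printing Implicit Defensive.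

Section RealizableOn.

Variables (X : eqType) (R : seq X).

Lemma realizable_on_label_unique (C : (rpt R -> bool) -> Prop) (S : sample X)
    (r : X) (b c : bool) :
  realizable_on C S -> (r, b) \in S -> (r, c) \in S -> b = c.
Proof.
case=> g [_ agS] /agS[rRb gb] /agS[rRc gc].
by move: gb gc => /= <- <-; rewrite (bool_irrelevance rRb rRc).
Qed.

Lemma shattered_restrict (H : hclass X) (g : rpt R -> bool) :
  shattered H R -> @restrict X H R g.
Proof. by move=> /(_ g)[h [Hh hg]]; exists h; split=> // p; rewrite hg. Qed.

End RealizableOn.

Section BitSamples.

Variables (X : eqType) (R : seq X) (n : nat).

Definition bit_at (x : bits n) (r : X) : bool :=
  if insub (index r R) is Some i then x i else false.

Definition bit_sample (b : bool) (x : bits n) : sample X :=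
  [seq (r, b) | r <- R & bit_at x r].

Lemma mem_bit_sample (b : bool) (x : bits n) (e : X * bool) :
  e \in bit_sample b x -> [/\ e.1 \in R, e.2 = b & bit_at x e.1].
Proof. by case/mapP=> r; rewrite mem_filter => /andP[xr rR] ->. Qed.

Lemma bit_sampleP (b : bool) (x : bits n) (r : X) :
  r \in R -> bit_at x r -> (r, b) \in bit_sample b x.
Proof. by move=> rR xr; apply: map_f; rewrite mem_filter xr. Qed.

Lemma points_in_bit_sample (b : bool) (x : bits n) :
  points_in R (bit_sample b x).
Proof. by move=> e /mem_bit_sample[]. Qed.

Lemma disjoint_bit_at (x y : bits n) (r : X) :
  disjoint_bits x y -> ~~ (bit_at x r && bit_at y r).
Proof. by rewrite /bit_at; case: insubP. Qed.

Lemma point_at_index (i : 'I_n) :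
  uniq R -> size R = n -> exists2 r, r \in R & forall x, bit_at x r = x i.
Proof.
move=> uR sR; have iR : i < size R by rewrite sR.
have [r0 _] : exists r0 : X, r0 \in R.
  by case: R iR => [|r0 R'] // _; exists r0; rewrite inE eqxx.
exists (nth r0 R i) => [|x]; first exact: mem_nth.
by rewrite /bit_at index_uniq // valK.
Qed.

End BitSamples.

Theorem lemma4 (X : eqType) (H : hclass X) (R : seq X) (n : nat) :
  uniq R -> size R = n -> shattered H R ->
  exists (Fa Fb : bits n -> sample X),
    (forall x, points_in R (Fa x)) /\ (forall y, points_in R (Fb y)) /\
    forall x y : bits n,
      disjoint_bits x y <-> @realizable_on X R (@restrict X H R) (Fa x ++ Fb y).
Proof.
move=> uR sR shR.
exists (bit_sample R true), (bit_sample R false).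
do 2![split; first exact: points_in_bit_sample].
move=> x y; split=> [xy | realS i].
- exists (fun p => bit_at R x (val p)); split; first exact: shattered_restrict.
  move=> e; rewrite mem_cat => /orP[] /mem_bit_sample[eR -> ye]; exists eR => //.
  by apply/negbTE; move: (disjoint_bit_at R e.1 xy); rewrite ye andbT.
apply/negP=> /andP[xi yi]; have [r rR rbit] := point_at_index i uR sR.
suff: true = false by [].
apply: (realizable_on_label_unique (r := r) realS); rewrite mem_cat.
- by rewrite bit_sampleP ?rbit.
- by rewrite bit_sampleP ?rbit ?orbT.
Qed.
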